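(* Let $G$ be a torsion-free group, $\mathbb{F}$ a field, $\alpha$ a zero divisor in $\mathbb{F}[G]$ with $|supp(\alpha)|=4$ and $|S_\alpha|=10$, and $\beta$ a mate of $\alpha$. Then one of the following holds: (i) there exist distinct non-trivial $x,y\in G$ and $\alpha'\in\mathbb{F}[G]$ with $supp(\alpha')=\{1,x,x^{-1},y\}$, $\alpha'\beta=0$ and $Z(\alpha,\beta)\cong Z(\alpha',\beta)$; (ii) there exist distinct non-trivial $x,y\in G$ and $\alpha'\in\mathbb{F}[G]$ with $supp(\alpha')=\{1,x,y,xy\}$, $\alpha'\beta=0$ and $Z(\alpha,\beta)\cong Z(\alpha',\beta)$. Furthermore, if $\mathbb{F}=\mathbb{F}_2$, then case (i) occurs.
   Context: $supp(\gamma)=\{x\in G:\gamma_x\ne0\}$; $S_\alpha=\{h^{-1}h':h\ne h',\ h,h'\in supp(\alpha)\}$. A mate of $\alpha$ is a non-zero $\beta$ with $\alpha\beta=0$ of minimal support size among all non-zero $\beta'$ with $\alpha\beta'=0$. For $\gamma\delta=0$, $Z(\gamma,\delta)$ is the multigraph with vertex set $supp(\delta)$ whose edges are the sets $\{(h,h',g,g'),(h',h,g',g)\}$ with $h,h'\in supp(\gamma)$, $g,g'\in supp(\delta)$, $g\ne g'$, $hg=h'g'$, each joining $g$ and $g'$. Isomorphism $\cong$ means a pair of bijections on vertices and on edges preserving adjacency and non-adjacency of vertices and of edges. *)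

From HB Require Import structures.
From mathcomp Require Import all_boot all_order all_algebra.
From mathcomp Require Import finmap.
Set Implicit Arguments. Unset Strict Implicit. Unset Printing Implicit Defensive.
Import GRing.Theory.
Local Open Scope ring_scope.
Local Open Scope fset_scope.

(* A (possibly infinite) group, given by its carrier (a choiceType, so that
   finitely supported functions on it are available) and its operations. *)
Record grp := Grp {
  gcar :> choiceType;
  gmul : gcar -> gcar -> gcar;
  gone : gcar;
  ginv : gcar -> gcar;
  gmulA : forall x y z, gmul x (gmul y z) = gmul (gmul x y) z;
  gmul1 : forall x, gmul gone x = x;
  gmulV : forall x, gmul (ginv x) x = gone
}.

Section GroupAlgebra.
Variable G : grp.

Fixpoint gpow (x : G) (n : nat) : G :=
  match n with 0 => @gone G | n.+1 => gmul x (gpow x n) end.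

Definition torsion_free : Prop :=
  forall (x : G) (n : nat), x <> @gone G -> (0 < n)%N -> gpow x n <> @gone G.

Variable F : fieldType.

Definition galg := {fsfun G -> F with 0}.

Definition supp (g : galg) : {fset G} := finsupp g.

Definition galg_nz (g : galg) : bool := supp g != fset0.

(* coefficient of x in the product a * b : sum over h g = x of a_h b_g *)
Definition galg_mul_coef (a b : galg) (x : G) : F :=
  \sum_(h <- supp a) a h * b (@gmul G (@ginv G h) x).

Definition galg_mul_zero (a b : galg) : Prop :=
  forall x : G, galg_mul_coef a b x = 0.

Definition zero_divisor (a : galg) : Prop :=
  galg_nz a /\ exists b : galg, galg_nz b /\ galg_mul_zero a b.

Definition S_set (a : galg) : {fset G} :=
  [fset @gmul G (@ginv G p.1) p.2 | p in [fset p in supp a `*` supp a | p.1 != p.2]].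

Definition mate (a b : galg) : Prop :=
  [/\ galg_nz b, galg_mul_zero a b &
      forall b' : galg, galg_nz b' -> galg_mul_zero a b' ->
        (#|` supp b| <= #|` supp b'|)%N].

Definition quad := (G * G * G * G)%type.
Definition qswap (q : quad) : quad :=
  let: (h, h', g, g') := q in (h', h, g', g).

Definition Zquads (c d : galg) : {fset quad} :=
  [fset q in ((supp c `*` supp c) `*` supp d) `*` supp d |
    let: (h, h', g, g') := q in (g != g') && (@gmul G h g == @gmul G h' g')].

Definition Zvert (c d : galg) : {fset G} := supp d.

Definition Zedges (c d : galg) : {fset {fset quad}} :=
  [fset [fset q; qswap q] | q in Zquads c d].

(* the vertices joined by the edge e = {(h,h',g,g'),(h',h,g',g)} are g, g' *)
Definition incident (e : {fset quad}) (v : G) : bool :=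
  [exists q : e, (val q).1.2 == v].

Definition vadj (c d : galg) (u v : G) : bool :=
  (u != v) && [exists e : Zedges c d, incident (val e) u && incident (val e) v].

Definition eadj (c d : galg) (e e' : {fset quad}) : bool :=
  (e != e') && [exists v : Zvert c d, incident e (val v) && incident e' (val v)].

Definition Ziso (c d c' d' : galg) : Prop :=
  exists (phi : G -> G) (psi : {fset quad} -> {fset quad}),
    [/\ {in Zvert c d &, injective phi},
        [fset phi v | v in Zvert c d] = Zvert c' d',
        {in Zedges c d &, injective psi} &
        [fset psi e | e in Zedges c d] = Zedges c' d'] /\
    [/\ (forall u v, u \in Zvert c d -> v \in Zvert c d ->
           vadj c' d' (phi u) (phi v) = vadj c d u v) &
        (forall e e', e \in Zedges c d -> e' \in Zedges c d ->
           eadj c' d' (psi e) (psi e') = eadj c d e e')].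

End GroupAlgebra.

(* Since supp alpha has 4 elements there are 12 ordered pairs (h, h') of
   distinct support elements, so |S_alpha| = 10 forces a coincidence
   a^-1 b = c^-1 d.  Torsion-freeness rules out an element of order 2, and the
   remaining coincidences say that some left translate s^-1 supp alpha is
   {1, x, x^-1, y} or {1, x, y, xy}.  Replacing alpha by s^-1 alpha keeps
   alpha beta = 0 and only relabels the h-components of the edges of
   Z(alpha, beta), so the graph is unchanged.  Over F_2 the second shape means
   alpha' = (1 + x)(1 + y); then (1 + y) beta is x-invariant, hence 0 since a
   non-trivial element of a torsion-free group has infinite orbits while
   supports are finite, and in the same way beta = 0. *)

From mathcomp Require Import all_boot all_order all_algebra finmap.
Set Implicit Arguments. Unset Strict Implicit. Unset Printing Implicit Defensive.
Import GRing.Theory.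
Local Open Scope ring_scope.
Local Open Scope fset_scope.

Section GroupFacts.
Variable G : grp.
Local Notation "x * y" := (@gmul G x y).
Local Notation "x ^-1" := (@ginv G x).
Local Notation "1" := (@gone G).

Lemma gmulgV (x : G) : x * x^-1 = 1.
Proof.
rewrite -[x * _]gmul1 -{1}(gmulV x^-1) -gmulA (gmulA x^-1 x) gmulV gmul1.
exact: gmulV.
Qed.

Lemma gmulg1 (x : G) : x * 1 = x.
Proof. by rewrite -(gmulV x) gmulA gmulgV gmul1. Qed.

Lemma gmulKg (x y : G) : x^-1 * (x * y) = y.
Proof. by rewrite gmulA gmulV gmul1. Qed.

Lemma gmulKVg (x y : G) : x * (x^-1 * y) = y.
Proof. by rewrite gmulA gmulgV gmul1. Qed.

Lemma gmulgK (x y : G) : (y * x) * x^-1 = y.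
Proof. by rewrite -gmulA gmulgV gmulg1. Qed.

Lemma gmulI (x : G) : injective (fun y => x * y).
Proof. by move=> y z yz; rewrite -(gmulKg x y) yz gmulKg. Qed.

Lemma gmulIg (x : G) : injective (fun y => y * x).
Proof. by move=> y z /= yz; rewrite -(gmulgK x y) yz gmulgK. Qed.

Lemma eq_gmul2l (x y z : G) : (x * y == x * z) = (y == z).
Proof. by apply/eqP/eqP => [/gmulI | ->]. Qed.

Lemma eq_gmul2r (x y z : G) : (y * x == z * x) = (y == z).
Proof. by apply/eqP/eqP => [/gmulIg | ->]. Qed.

Lemma ginvK (x : G) : (x^-1)^-1 = x.
Proof. by apply: (@gmulIg x^-1); rewrite /= gmulV gmulgV. Qed.

Lemma ginvM (x y : G) : (x * y)^-1 = y^-1 * x^-1.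
Proof. by apply: (@gmulIg (x * y)); rewrite /= gmulV -gmulA gmulKg gmulV. Qed.

Lemma ginv1 : 1^-1 = 1.
Proof. by rewrite -{2}(gmulV 1) gmulg1. Qed.

Lemma eq_gmulV (s z w : G) : (s * z == w) = (z == s^-1 * w).
Proof. by apply/eqP/eqP => [<-|->]; rewrite ?gmulKg ?gmulKVg. Qed.

Lemma gmulV_eq1 (s a : G) : (s^-1 * a == 1) = (a == s).
Proof. by rewrite eq_gmulV ginvK gmulg1. Qed.

Lemma ginv_eq1 (x : G) : (x^-1 == 1) = (x == 1).
Proof.
by apply/eqP/eqP => [x1|->]; rewrite ?ginv1 // -(ginvK x) x1 ginv1.
Qed.

Lemma mem_lshift (s : G) (A : {fset G}) z :
  (z \in [fset s^-1 * h | h in A]) = (s * z \in A).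
Proof.
apply/imfsetP/idP => [[h hA ->] | szA]; first by rewrite gmulKVg.
by exists (s * z); rewrite ?gmulKg.
Qed.

Lemma gpowD (x : G) m n : gpow x (m + n) = gpow x m * gpow x n.
Proof. by elim: m => [|m IH] /=; rewrite ?gmul1 // IH gmulA. Qed.

Lemma torsion_free_gpow_inj (u z : G) :
  torsion_free G -> u != 1 -> injective (fun n => gpow u n * z).
Proof.
move=> tf u1; suff lt_neq i j : (i < j)%N -> gpow u j * z <> gpow u i * z.
  by move=> i j eqij; case: (ltngtP i j) => // [/lt_neq|/lt_neq]; rewrite eqij.
move=> lt_ij; rewrite -(subnK (ltnW lt_ij)) gpowD -gmulA -{2}(gmul1 (gpow u i * z)).
by move/gmulIg; apply: tf; [apply/eqP | rewrite subn_gt0].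
Qed.

Lemma invariant_finsupp_eq0 (R : zmodType) (f : G -> R) (S : {fset G}) (u : G) :
  torsion_free G -> u != 1 -> (forall w, f w != 0 -> w \in S) ->
  (forall z, f (u * z) = f z) -> forall z, f z = 0.
Proof.
move=> tf u1 fS finv z; apply: contraTeq isT => fz.
have f_orbit n : f (gpow u n * z) = f z.
  by elim: n => [|n IH] /=; rewrite ?gmul1 // -gmulA finv.
pose orbit := [seq gpow u n * z | n <- iota 0 (#|` S|).+1].
have orbit_uniq : uniq orbit.
  by rewrite (map_inj_uniq (torsion_free_gpow_inj (z := z) tf u1)) iota_uniq.
have orbitS : {subset orbit <= S}.
  by move=> _ /mapP[n _ ->]; apply: fS; rewrite f_orbit.
by have := uniq_leq_size orbit_uniq orbitS; rewrite size_map size_iota ltnn.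
Qed.

End GroupFacts.

Lemma fset_exists_imfset (T U : choiceType) (f : T -> U) (A : {fset T}) (P : pred U) :
  [exists y : f @` A, P (val y)] = [exists x : A, P (f (val x))].
Proof.
apply/existsP/existsP => [[[y /= fAy] Py] | [[x /= Ax] Pfx]].
  by case/imfsetP: fAy Py => x Ax -> Pfx; exists [` Ax].
by exists [` in_imfset _ f Ax].
Qed.

Lemma imfset_collision (T U : choiceType) (f : T -> U) (A : {fset T}) :
  #|` f @` A| != #|` A| -> exists p q, [/\ p \in A, q \in A, p != q & f p = f q].
Proof.
move=> /card_in_imfsetP not_inj.
have [/existsP[p /existsP[q /andP[pq /eqP fpq]]] | no_collision] :=
  boolP [exists p : A, exists q : A, (val p != val q) && (f (val p) == f (val q))].
  by exists (val p), (val q); split; rewrite ?fsvalP.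
case: not_inj => p q pA qA fpq; apply: contraNeq no_collision => pq.
by apply/existsP; exists [` pA]; apply/existsP; exists [` qA]; rewrite /= pq fpq eqxx.
Qed.

Section FourSets.
Variable T : choiceType.
Implicit Types (A : {fset T}) (a b c d : T).

Definition offdiag A : {fset T * T} := [fset p in A `*` A | p.1 != p.2].

Lemma card_offdiag A : #|` offdiag A| = (#|` A| * (#|` A|).-1)%N.
Proof.
rewrite card_fset_sum1 big_fset /= big_mkcond /=.
rewrite big_imfset2 /=; last by move=> [? ?] [? ?] _ _ /= [-> ->].
rewrite (eq_big_seq (fun _ => (#|` A|).-1)); last first.
  move=> a aA; rewrite (big_fsetD1 a) //= eqxx add0n.
  rewrite (cardfsD1 a) aA /= card_fset_sum1 big_seq_cond [RHS]big_seq_cond.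
  by apply: eq_bigr => b; rewrite !inE => /andP [/andP [/negPf ba _] _]; rewrite eq_sym ba.
by rewrite big_const_seq count_predT iter_addn_0 mulnC.
Qed.

Lemma card_fset_seq_le (s : seq T) : (#|` [fset x in s]| <= size s)%N.
Proof. by rewrite card_fseq size_undup. Qed.

Lemma fset4_eq_card A a b c d :
  #|` A| = 4%N -> a \in A -> b \in A -> c \in A -> d \in A ->
  uniq [:: a; b; c; d] -> A = [fset a; b; c; d].
Proof.
move=> cardA aA bA cA dA abcd; have -> : [fset a; b; c; d] = [fset x in [:: a; b; c; d]].
  by apply/fsetP => z; rewrite !inE orbF !orbA.
apply/eqP; rewrite eq_sym eqEfcard card_fseq undup_id // cardA leqnn andbT.
by apply/fsubsetP => z; rewrite !inE orbF => /or4P[] /eqP ->.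
Qed.

Lemma fset4_complete A a b c : #|` A| = 4%N -> a \in A -> b \in A -> c \in A ->
  uniq [:: a; b; c] -> exists2 e, uniq [:: a; b; c; e] & A = [fset a; b; c; e].
Proof.
move=> cardA aA bA cA abc.
have : ~~ (A `<=` [fset x in [:: a; b; c]]).
  by apply/negP => /fsubset_leq_card; rewrite cardA => /leq_trans/(_ (card_fset_seq_le _)).
case/fsubsetPn => e eA; rewrite in_fset => e_new.
have abce : uniq [:: a; b; c; e].
  by rewrite -[[:: a; b; c; e]]/(rcons [:: a; b; c] e) rcons_uniq e_new.
by exists e => //; apply: fset4_eq_card.
Qed.

End FourSets.

Lemma big_fset_uniq (T : choiceType) (R : nmodType) (A : {fset T}) (s : seq T)
    (f : T -> R) :
  uniq s -> A =i s -> \sum_(i <- A) f i = \sum_(i <- s) f i.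
Proof. by move=> s_uniq As; apply/perm_big/uniq_perm; rewrite ?fset_uniq. Qed.

Section Translation.
Variables (G : grp) (F : fieldType).
Local Notation "x * y" := (@gmul G x y).
Local Notation "x ^-1" := (@ginv G x).
Implicit Types (s : G) (a b : galg G F).

Lemma mem_supp a z : (z \in supp a) = (a z != 0).
Proof. exact: mem_finsupp. Qed.

(* [ltrans s a] is the product s^-1 a in F[G]. *)
Definition ltrans s a : galg G F :=
  [fsfun z in [fset s^-1 * h | h in supp a] => a (s * z)].

Lemma ltransE s a z : ltrans s a z = a (s * z).
Proof.
rewrite fsfunE; case: ifPn => // zN; apply/esym/eqP; apply: contraNT zN => asz.
by apply/imfsetP; exists (s * z); rewrite ?mem_supp ?gmulKg.
Qed.

Lemma mem_supp_ltrans s a z : (z \in supp (ltrans s a)) = (s * z \in supp a).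
Proof. by rewrite !mem_supp ltransE. Qed.

Lemma supp_ltrans s a : supp (ltrans s a) = [fset s^-1 * h | h in supp a].
Proof. by apply/fsetP => z; rewrite mem_supp_ltrans mem_lshift. Qed.

Lemma ltrans_mul_coef s a b x :
  galg_mul_coef (ltrans s a) b x = galg_mul_coef a b (s * x).
Proof.
rewrite /galg_mul_coef supp_ltrans big_imfset /=; last by move=> ? ? _ _; apply: gmulI.
by apply: eq_bigr => h _; rewrite ltransE gmulKVg ginvM ginvK -gmulA.
Qed.

Lemma ltrans_mul_zero s a b : galg_mul_zero a b -> galg_mul_zero (ltrans s a) b.
Proof. by move=> ab x; rewrite ltrans_mul_coef. Qed.

Definition qshift s (q : quad G) : quad G :=
  let: (h, h', g, g') := q in (s * h, s * h', g, g').

Definition eshift s (e : {fset quad G}) : {fset quad G} := qshift s @` e.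

Lemma qshiftK s : cancel (qshift s) (qshift s^-1).
Proof. by case=> [[[h h'] g] g'] /=; rewrite !gmulKg. Qed.

Lemma qshift_inj s : injective (qshift s).
Proof. exact: can_inj (qshiftK s). Qed.

Lemma qshift_swap s q : qshift s (qswap q) = qswap (qshift s q).
Proof. by case: q => [[[h h'] g] g']. Qed.

Lemma eshift_inj s : injective (eshift s).
Proof.
move=> e e' ee'; apply/fsetP => q.
have := congr1 (fun A => qshift s q \in A) ee'.
by rewrite /= !mem_imfset //; apply: qshift_inj.
Qed.

Lemma incident_eshift s e v : incident (eshift s e) v = incident e v.
Proof.
rewrite /incident (fset_exists_imfset _ _ (fun q : quad G => q.1.2 == v)).
by apply: eq_existsb => -[[[[h h'] g] g'] /= _].
Qed.

Lemma Zquads_ltrans s a b : Zquads (ltrans s a) b = eshift s^-1 (Zquads a b).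
Proof.
apply/fsetP => q; rewrite /eshift -{2}(qshiftK s q) [RHS]mem_imfset; last exact: qshift_inj.
case: q => [[[h h'] g] g']; rewrite !inE /= !mem_supp_ltrans.
by rewrite -!gmulA eq_gmul2l.
Qed.

Lemma Zedges_ltrans s a b : Zedges (ltrans s a) b = eshift s^-1 @` Zedges a b.
Proof.
rewrite /Zedges Zquads_ltrans /eshift -!imfset_comp; apply: eq_imfset => // q /=.
by rewrite imfset_fset2 qshift_swap.
Qed.

Lemma Ziso_ltrans s a b : Ziso a b (ltrans s a) b.
Proof.
exists id, (eshift s^-1); split; split.
- by [].
- exact: imfset_id.
- by move=> e e' _ _; apply: eshift_inj.
- by rewrite Zedges_ltrans.
- move=> u v _ _; rewrite /vadj Zedges_ltrans.
  rewrite (fset_exists_imfset _ _ (fun e => incident e u && incident e v)).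
  by under eq_existsb => e do rewrite !incident_eshift.
- move=> e e' _ _; rewrite /eadj (inj_eq (@eshift_inj _)).
  by under eq_existsb => v do rewrite !incident_eshift.
Qed.

Lemma ltrans_witness s a b B : [fset s^-1 * h | h in supp a] = B -> galg_mul_zero a b ->
  [/\ supp (ltrans s a) = B, galg_mul_zero (ltrans s a) b & Ziso a b (ltrans s a) b].
Proof.
by move=> <- ab; split; [apply: supp_ltrans | apply: ltrans_mul_zero | apply: Ziso_ltrans].
Qed.

End Translation.

Section Shapes.
Variable G : grp.
Local Notation "x * y" := (@gmul G x y).
Local Notation "x ^-1" := (@ginv G x).
Local Notation "1" := (@gone G).
Implicit Types (A : {fset G}) (s x y : G).

Definition inv_shaped A := exists s x y,
  [/\ x != y, x != 1 & y != 1] /\ [fset s^-1 * h | h in A] = [fset 1; x; x^-1; y].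

Definition prod_shaped A := exists s x y,
  [/\ x != y, x != 1, y != 1 & x * y != 1] /\
  [fset s^-1 * h | h in A] = [fset 1; x; y; x * y].

Lemma inv_shaped_intro A s a b : #|` A| = 4%N -> s \in A -> a \in A -> b \in A ->
  uniq [:: s; a; b] -> (s^-1 * a)^-1 = s^-1 * b -> inv_shaped A.
Proof.
move=> cardA sA aA bA sab inv_ab; have [e sabe ->] := fset4_complete cardA sA aA bA sab.
exists s, (s^-1 * a), (s^-1 * e); split.
  move: sabe; rewrite /= !inE !negb_or eq_gmul2l !gmulV_eq1.
  by case/and4P=> /and3P[sa _ se] /andP[_ ae] _ _; split; rewrite // eq_sym.
by apply/fsetP => z; rewrite mem_lshift inv_ab !inE !eq_gmulV gmulV.
Qed.

Lemma card4_S10_shaped A : torsion_free G -> #|` A| = 4%N ->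
  #|` [fset p.1^-1 * p.2 | p in offdiag A]| = 10%N -> inv_shaped A \/ prod_shaped A.
Proof.
move=> tf cardA cardS.
have [[a b] [[c d] [abA cdA neq_abcd e]]] : exists p q,
    [/\ p \in offdiag A, q \in offdiag A, p != q & p.1^-1 * p.2 = q.1^-1 * q.2].
  by apply: imfset_collision; rewrite cardS card_offdiag cardA.
move: abA cdA; rewrite !inE /= => /andP[/andP[aA bA] ab] /andP[/andP[cA dA] cd].
rewrite /= in e; rewrite xpair_eqE in neq_abcd.
have ac : a != c.
  by apply: contraNneq neq_abcd => ac; move: e; rewrite -ac => /gmulI ->; rewrite !eqxx.
have bd : b != d.
  apply: contraNneq neq_abcd => bd; move: e; rewrite -bd => /gmulIg/(congr1 (@ginv G)).
  by rewrite !ginvK => ->; rewrite !eqxx.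
case: (eqVneq a d) => [ad | ad]; case: (eqVneq b c) => [bc | bc].
- exfalso; apply: (tf (a^-1 * b) 2) => //; first by apply/eqP; rewrite gmulV_eq1 eq_sym.
  by rewrite /= gmulg1 {2}e -bc ad -gmulA gmulKVg gmulV.
- left; apply: (@inv_shaped_intro A a b c) => //; first by rewrite /= !inE negb_or ab ac bc.
  by rewrite e ad ginvM ginvK.
- left; apply: (@inv_shaped_intro A b a d) => //.
    by rewrite /= !inE negb_or eq_sym ab bd ad.
  by rewrite ginvM ginvK e bc.
- right; exists c, (c^-1 * a), (c^-1 * d).
  have xyE : (c^-1 * a) * (c^-1 * d) = c^-1 * b by rewrite -e -gmulA gmulKVg.
  have -> : A = [fset c; a; d; b].
    apply: fset4_eq_card; rewrite //= !inE !negb_or.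
    by rewrite eq_sym ac cd eq_sym bc ad ab eq_sym bd.
  rewrite xyE eq_gmul2l !gmulV_eq1; split; first by split; rewrite // eq_sym.
  by apply/fsetP => z; rewrite mem_lshift !inE !eq_gmulV gmulV.
Qed.

End Shapes.

Lemma F2_pchar2 (F : fieldType) : (forall c : F, c = 0 \/ c = 1) -> 2 \in [pchar F].
Proof.
move=> F2; apply/andP; split => //; case: (F2 2%:R) => [-> // | two_eq1].
have : (1 + 1 = 1 + 0 :> F)%R by rewrite addr0 -mulr2n.
by move/addrI/eqP; rewrite oner_eq0.
Qed.

Section CharTwo.
Local Open Scope ring_scope.
Variables (G : grp) (F : fieldType).
Local Notation "x * y" := (@gmul G x y).
Local Notation "x ^-1" := (@ginv G x).
Local Notation "1" := (@gone G).
Variables (a b : galg G F) (x y : G).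
Hypotheses (x1 : x != 1) (y1 : y != 1) (xy : x != y) (xy1 : x * y != 1).
Hypothesis supp_a : supp a = [fset 1; x; y; x * y].
Hypothesis a_unit : {in supp a, forall h, a h = 1%R}.

Lemma prod_shaped_mul_coef z : galg_mul_coef a b z =
  b z + b (x^-1 * z) + b (y^-1 * z) + b (y^-1 * (x^-1 * z)).
Proof.
have uniq_supp : uniq [:: 1; x; y; x * y].
  rewrite /= !inE !negb_or !(eq_sym 1) x1 y1 xy1 xy /=.
  rewrite -{1}[x]gmulg1 eq_gmul2l eq_sym y1 -{1}[y]gmul1 eq_gmul2r.
  by rewrite eq_sym x1.
rewrite /galg_mul_coef (big_fset_uniq _ uniq_supp); last first.
  by move=> h; rewrite supp_a !inE !orbA.
rewrite !big_cons big_nil addr0 !a_unit ?supp_a ?inE ?eqxx ?orbT //.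
by rewrite !mul1r ginv1 gmul1 ginvM -gmulA !addrA.
Qed.

Hypotheses (tf : torsion_free G) (char2 : 2 \in [pchar F]).

Lemma char2_prod_shaped_annihilator : galg_mul_zero a b -> supp b = fset0.
Proof.
move=> ab.
pose gam w := b w + b (y^-1 * w).
have gam_inv z : gam (x^-1 * z) = gam z.
  have := ab z; rewrite prod_shaped_mul_coef -addrA addrACA -/(gam z) -/(gam (x^-1 * z)).
  by move/eqP; rewrite addr_eq0 oppr_pchar2 // => /eqP.
have gam_supp w : gam w != 0 -> w \in supp b `|` [fset y * g | g in supp b].
  rewrite inE mem_supp; case: (eqVneq (b w) 0) => [bw0 | //].
  by rewrite /gam bw0 add0r -mem_supp => ?; rewrite -[w](gmulKVg y) in_imfset ?orbT.
have gam0 : forall z, gam z = 0.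
  by apply: invariant_finsupp_eq0 gam_supp gam_inv; rewrite ?ginv_eq1.
have b_inv z : b (y^-1 * z) = b z.
  by have /eqP := gam0 z; rewrite addr_eq0 oppr_pchar2 // => /eqP.
have b0 : forall z, b z = 0.
  apply: (invariant_finsupp_eq0 (S := supp b) tf _ _ b_inv) => [|w].
    by rewrite ginv_eq1.
  by rewrite mem_supp.
by apply/fsetP => w; rewrite inE mem_supp b0 eqxx.
Qed.

End CharTwo.

Theorem mainTheorem13 (G : grp) (F : fieldType) (alpha beta : galg G F) :
  torsion_free G ->
  zero_divisor alpha ->
  #|` supp alpha| = 4%N ->
  #|` S_set alpha| = 10%N ->
  mate alpha beta ->
  let case_i :=
    exists (x y : G) (alpha' : galg G F),
      [/\ x != y, x != @gone G & y != @gone G] /\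
      [/\           supp alpha' = [fset @gone G; x; @ginv G x; y],
          galg_mul_zero alpha' beta &
          Ziso alpha beta alpha' beta] in
  let case_ii :=
    exists (x y : G) (alpha' : galg G F),
      [/\ x != y, x != @gone G & y != @gone G] /\
      [/\           supp alpha' = [fset @gone G; x; y; @gmul G x y],
          galg_mul_zero alpha' beta &
          Ziso alpha beta alpha' beta] in
  (case_i \/ case_ii) /\
  ((forall c : F, c = 0 \/ c = 1) -> case_i).
Proof.
move=> tf _ card_supp card_S [beta_nz alpha_beta _] case_i case_ii.
have inv_i : inv_shaped (supp alpha) -> case_i.
  case=> s [x [y [xy_ne /ltrans_witness/(_ alpha_beta) ?]]].
  by exists x, y, (ltrans s alpha).
have prod_ii : prod_shaped (supp alpha) -> case_ii.
  case=> s [x [y [[xy x1 y1 _] /ltrans_witness/(_ alpha_beta) ?]]].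
  by exists x, y, (ltrans s alpha).
have shaped := card4_S10_shaped tf card_supp card_S.
split; first by case: shaped => [/inv_i | /prod_ii]; [left | right].
move=> F2; case: shaped => [/inv_i // | [s [x [y [[xy x1 y1 xy1] shifted]]]]].
have [supp_a' a'_beta _] := ltrans_witness shifted alpha_beta.
case/negP: beta_nz; apply/eqP.
apply: (char2_prod_shaped_annihilator x1 y1 xy xy1 supp_a' _ tf (F2_pchar2 F2) a'_beta).
by move=> h; rewrite mem_supp; case: (F2 (ltrans s alpha h)) => ->; rewrite ?eqxx.
Qed.
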